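(* Let $r_1 \ge 2$ and $x_1 \ge 1$ be integers and $d = x_1 + r_1 - 1$. Let $R = K[z_1,\ldots,z_{r_1+3},y_1,\ldots,y_d]$ over a field $K$ with the lexicographic order $<_{lex}$ given by $z_1 > \cdots > z_{r_1+3} > y_1 > \cdots > y_d$. Let $B$ be the set of pairs $(i,j)\in\mathbb{N}^2$ with $j-i\ge 2$, $1\le i\le r_1$, $j \le r_1+3$, $j\ne r_1+1$, and let $J$ be the monomial ideal of $R$ generated by the monomials $z_iz_j$ for $(i,j)\in B$, $z_{k+1}\prod_{s=1}^{r_1-1}y_s$ for $0\le k\le r_1-1$, $z_{r_1-k}\prod_{s=r_1}^{d}y_s$ for $0\le k\le r_1-1$, $z_{r_1+2}\prod_{s=1}^{r_1-1}y_s$, and $z_{r_1+1}\prod_{s=r_1}^{d}y_s$. Suppose $f = z_1^{\gamma_1}\cdots z_{r_1+3}^{\gamma_{r_1+3}} y_1^{\delta_1}\cdots y_d^{\delta_d}$ is a monomial with $f \notin J$ and $\gamma_i > 0$ for at least one $i$. Let $m$ be the minimal index with $\gamma_m > 0$. Then $|\{i : \gamma_i > 0\}| \le 3$, and moreover: (1) if $1 \le m \le r_1-1$, then $\gamma_i = 0$ for all $i \in \{1,\ldots,r_1+3\}\setminus\{m, m+1, r_1+1\}$; (2) if $m = r_1$, then $\gamma_i = 0$ for all $i \in \{1,\ldots,r_1-1\}\cup\{r_1+3\}$; (3) if $m \in \{r_1+1, r_1+2, r_1+3\}$, then $\gamma_i = 0$ for all $i < m$.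
   Context: The ideal $J$ is the initial ideal, with respect to $<_{lex}$, generated by the leading terms of a specific set of binomials in the toric ideal of the lattice points of the simplex $\mathrm{conv}\{\mathbf{e}_1,\ldots,\mathbf{e}_d,-\mathbf{q}\}$, $\mathbf{q}=(r_1^{x_1},(1+r_1x_1)^{r_1-1})$; only the monomials listed are needed for the statement. *)

From mathcomp Require Import all_boot.
Set Implicit Arguments. Unset Strict Implicit. Unset Printing Implicit Defensive.

(* A monomial of R = K[z_1..z_{r1+3}, y_1..y_d] is given by its exponent
   vectors (gamma, delta), 1-based: z_i has exponent gamma i (1 <= i <= r1+3),
   y_s has exponent delta s (1 <= s <= d).  Entries outside range are ignored
   for the monomials under consideration (generators have them equal to 0). *)
Definition mon := ((nat -> nat) * (nat -> nat))%type.

Definition dvdm (a b : mon) : Prop :=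
  (forall i, a.1 i <= b.1 i) /\ (forall s, a.2 s <= b.2 s).

Definition ev1 (i : nat) : nat -> nat := fun k => nat_of_bool (k == i).
Definition ev2 (i j : nat) : nat -> nat := fun k => nat_of_bool ((k == i) || (k == j)).
Definition evrange (a b : nat) : nat -> nat := fun s => nat_of_bool (a <= s <= b).
Definition ev0 : nat -> nat := fun _ => 0.

Definition dim_d (r1 x1 : nat) : nat := x1 + r1 - 1.

Definition inB (r1 i j : nat) : bool :=
  [&& 2 <= j - i, i <= j, 1 <= i, i <= r1, j <= r1 + 3 & j != r1 + 1].

Definition J_gen (r1 x1 : nat) (g : mon) : Prop :=
  let d := dim_d r1 x1 in
  (exists i j, inB r1 i j /\ g = (ev2 i j, ev0))
  \/ (exists k, k <= r1 - 1 /\ g = (ev1 k.+1, evrange 1 (r1 - 1)))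
  \/ (exists k, k <= r1 - 1 /\ g = (ev1 (r1 - k), evrange r1 d))
  \/ g = (ev1 (r1 + 2), evrange 1 (r1 - 1))
  \/ g = (ev1 (r1 + 1), evrange r1 d).

Definition inJ (r1 x1 : nat) (f : mon) : Prop :=
  exists g, J_gen r1 x1 g /\ dvdm g f.

(* Only the quadratic generators z_i z_j, (i, j) in B, are needed: since f is
   not in J, no such pair lies in the support of f.  Every index in the support
   is at least m, and as long as m <= r1, pairing m with each index >= m + 2
   other than r1 + 1 leaves at most three candidates: {m, m+1, r1+1} when
   m < r1, {r1, r1+1, r1+2} when m = r1, and {r1+1, r1+2, r1+3} otherwise. *)

From mathcomp Require Import all_boot.
From mathcomp Require Import zify.

Set Implicit Arguments.
Unset Strict Implicit.
Unset Printing Implicit Defensive.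

Lemma size_filter_le_uniq (T : eqType) (s t : seq T) (P : pred T) :
  uniq s -> {in s, forall x, P x -> x \in t} -> size [seq x <- s | P x] <= size t.
Proof.
move=> s_uniq sPt; apply: uniq_leq_size; first by rewrite filter_uniq.
by move=> x; rewrite mem_filter => /andP[Px sx]; exact: sPt.
Qed.

Lemma inJ_zpair (r1 x1 : nat) (gamma delta : nat -> nat) (i j : nat) :
  inB r1 i j -> 0 < gamma i -> 0 < gamma j -> inJ r1 x1 (gamma, delta).
Proof.
move=> ijB gi gj; exists (ev2 i j, ev0); split; first by left; exists i, j.
split=> k //=; rewrite /ev2.
by case: eqP => [->|_] //=; case: eqP => [->|_].
Qed.

Definition window (r1 m : nat) : seq nat :=
  if m < r1 then [:: m; m.+1; r1 + 1]
  else if m == r1 then [:: r1; r1 + 1; r1 + 2]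
  else [:: r1 + 1; r1 + 2; r1 + 3].

Lemma size_window (r1 m : nat) : size (window r1 m) = 3.
Proof. by rewrite /window; case: ifP => //; case: ifP. Qed.

Section Support.

Variables (r1 x1 m : nat) (gamma delta : nat -> nat).
Hypothesis f_notin_J : ~ inJ r1 x1 (gamma, delta).
Hypothesis m_pos : 0 < m.
Hypothesis m_supp : 0 < gamma m.
Hypothesis m_min : forall i, 1 <= i < m -> gamma i = 0.

Lemma support_ge_min i : 1 <= i -> 0 < gamma i -> m <= i.
Proof. by move=> i_ge1 gi; rewrite leqNgt; apply/negP => im; rewrite m_min ?i_ge1 in gi. Qed.

Lemma support_in_window i :
  1 <= i <= r1 + 3 -> 0 < gamma i -> i \in window r1 m.
Proof.
move=> i_range gi; have mi := support_ge_min (proj1 (andP i_range)) gi.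
have no_pair_with_m : ~ inB r1 m i.
  by move=> miB; apply: f_notin_J; exact: inJ_zpair miB m_supp gi.
rewrite /window; case: ltnP => [m_lt|m_ge]; last case: eqVneq => [m_r1|m_ne];
  rewrite !inE; apply/negPn/negP => i_out; apply: no_pair_with_m; rewrite /inB; lia.
Qed.

Lemma support_off_window_eq0 i :
  1 <= i <= r1 + 3 -> i \notin window r1 m -> gamma i = 0.
Proof.
move=> i_range i_out; apply/eqP; rewrite -leqn0 leqNgt.
by apply: contra i_out; exact: support_in_window.
Qed.

End Support.

Theorem lemma3p4 (r1 x1 : nat) (gamma delta : nat -> nat) :
  2 <= r1 -> 1 <= x1 ->
  ~ inJ r1 x1 (gamma, delta) ->
  forall m : nat,
    1 <= m <= r1 + 3 -> 0 < gamma m ->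
    (forall i, 1 <= i < m -> gamma i = 0) ->
    size [seq i <- iota 1 (r1 + 3) | 0 < gamma i] <= 3 /\
    ((1 <= m <= r1 - 1) ->
       forall i, 1 <= i <= r1 + 3 -> i \notin [:: m; m.+1; r1 + 1] -> gamma i = 0) /\
    (m = r1 ->
       forall i, (1 <= i <= r1 - 1) || (i == r1 + 3) -> gamma i = 0) /\
    (r1 + 1 <= m <= r1 + 3 ->
       forall i, 1 <= i < m -> gamma i = 0).
Proof.
move=> _ _ f_notin_J m m_range gm m_min.
have m_pos := proj1 (andP m_range).
have in_window := support_in_window f_notin_J m_pos gm m_min.
have off_window_eq0 := support_off_window_eq0 f_notin_J m_pos gm m_min.
split.
  rewrite -[leqRHS](size_window r1 m).
  apply: size_filter_le_uniq; first exact: iota_uniq.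
  by move=> i; rewrite mem_iota => i_range; apply: in_window => //; lia.
split.
  move=> m_lt i i_range i_out; apply: off_window_eq0 => //.
  by rewrite /window ifT //; lia.
split=> // m_r1 i /orP[i_lt | /eqP ->]; first by apply: m_min; lia.
apply: off_window_eq0; first lia.
by rewrite /window m_r1 ltnn eqxx !inE; lia.
Qed.
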